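(* Let $\{\omega_n\}_{n\ge0}$ be a sequence in $\mathbb{T}$ with the repetition property. Then each of the following sequences has the repetition property: (a) $\{\omega_{n+l}\}_{n\ge0}$ for every $l\in\mathbb{Z}_+$; (b) $\{\omega_{nl}\}_{n\ge0}$ for every $l\in\mathbb{Z}_+$; (c) $\{l\omega_n\}_{n\ge0}$ for every $l\in\mathbb{Z}$. Moreover, the original sequence together with all the sequences listed in (a), (b), (c) have the joint repetition property.
   Context: $\mathbb{T}=\mathbb{R}/\mathbb{Z}$ with metric $\mathrm{dist}(x,y)=\langle x-y\rangle$, where $\langle\tau\rangle=\min\{|\hat\tau-p|:p\in\mathbb{Z}\}$ for any representative $\hat\tau\in\mathbb{R}$ of $\tau$. $\mathbb{Z}_+=\{1,2,\ldots\}$. A sequence $\{\omega_n\}_{n\ge0}$ in a metric space $\Omega$ has the repetition property if for every $\varepsilon>0$ and $r \in \mathbb{Z}_+$ there exists $q \in \mathbb{Z}_+$ such that $\mathrm{dist}(\omega_n,\omega_{n+q}) < \varepsilon$ for $n = 0,1,\ldots, rq$. A family of sequences $\{\omega^{(\gamma)}_n\}_{n\ge0}$ in metric spaces $\Omega^{(\gamma)}$, $\gamma\in\Gamma$, has the joint repetition property if each of them has the repetition property and, for each finite subfamily and each $\varepsilon>0$, $r\in\mathbb{Z}_+$, a single $q\in\mathbb{Z}_+$ can be chosen that works simultaneously for all sequences in the subfamily. *)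

(* the torus T = R/Z is represented by real representatives. *)
From Stdlib Require Import Reals List.
Open Scope R_scope.

(* <tau> = min { |tau - p| : p in Z }.  With f = tau - floor tau in [0,1),
   the nearest integers are floor tau and floor tau + 1, so the min is
   min (f, 1 - f).  Int_part is the floor in Stdlib. *)
Definition tnorm (tau : R) : R :=
  let f := tau - IZR (Int_part tau) in Rmin f (1 - f).

Definition tdist (x y : R) : R := tnorm (x - y).

Definition repetition (w : nat -> R) : Prop :=
  forall (eps : R) (r : nat), 0 < eps -> (1 <= r)%nat ->
    exists q : nat, (1 <= q)%nat /\
      forall n : nat, (n <= r * q)%nat -> tdist (w n) (w (n + q)%nat) < eps.

Definition joint_repetition {G : Type} (F : G -> nat -> R) : Prop :=
  (forall g, repetition (F g)) /\
  forall (S : list G) (eps : R) (r : nat), 0 < eps -> (1 <= r)%nat ->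
    exists q : nat, (1 <= q)%nat /\
      forall g, In g S ->
        forall n : nat, (n <= r * q)%nat -> tdist (F g n) (F g (n + q)%nat) < eps.

(* Indices of the family in Lemma 3.1: the original sequence, shifts (a),
   dilations of the index (b), integer multiples (c). *)
Inductive fam_index : Type :=
  | FOrig : fam_index
  | FShift : nat -> fam_index
  | FDil : nat -> fam_index
  | FMul : Z -> fam_index.

Definition fam_valid (i : fam_index) : Prop :=
  match i with
  | FOrig => True
  | FShift l => (1 <= l)%nat
  | FDil l => (1 <= l)%nat
  | FMul _ => True
  end.

Definition fam (w : nat -> R) (i : fam_index) : nat -> R :=
  match i with
  | FOrig => w
  | FShift l => fun n => w (n + l)%nat
  | FDil l => fun n => w (n * l)%nat
  | FMul l => fun n => IZR l * w n
  end.

(* Each derived sequence F is "controlled" by w: there are an index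
   factor A >= 1 and a constant C > 0 such that whenever w repeats with
   period q up to precision delta on [0, (r+1) A q], F repeats with period
   q up to precision C delta on [0, r q].  For a shift by l take A = l; for
   the dilation n |-> n l take A = l, C = l and telescope the l steps of
   length q (triangle inequality on T); for multiplication by k use
   <k x> <= |k| <x>.  Finitely many controls merge into one (add the A's and
   the C's), so a single period q given by the repetition property of w,
   applied with precision eps / C and with (r+1) A in place of r, works for
   a whole finite subfamily. *)
From Stdlib Require Import Reals List Lra Lia Psatz ZArith.
Open Scope R_scope.

Lemma tnorm_spec (x : R) :
  (forall p : Z, tnorm x <= Rabs (x - IZR p)) /\
  exists p : Z, tnorm x = Rabs (x - IZR p).
Proof.
  unfold tnorm; cbv zeta.
  set (z := Int_part x).
  destruct (base_Int_part x) as [Hzle Hzgt]; fold z in Hzle, Hzgt.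
  split.
  - intros p. destruct (Z_le_gt_dec p z) as [Hp | Hp].
    + apply IZR_le in Hp.
      eapply Rle_trans; [apply Rmin_l |]. rewrite Rabs_right; lra.
    + assert (Hp1 : (z + 1 <= p)%Z) by lia.
      apply IZR_le in Hp1; rewrite plus_IZR in Hp1.
      eapply Rle_trans; [apply Rmin_r |]. rewrite Rabs_left1; lra.
  - destruct (Rle_dec (x - IZR z) (1 - (x - IZR z))).
    + exists z. rewrite Rmin_left by lra. rewrite Rabs_right; lra.
    + exists (z + 1)%Z. rewrite Rmin_right by lra.
      rewrite plus_IZR, Rabs_left1; lra.
Qed.

Lemma tnorm_nonneg (x : R) : 0 <= tnorm x.
Proof. destruct (tnorm_spec x) as [_ [p ->]]; apply Rabs_pos. Qed.

Lemma tnorm_add (x y : R) : tnorm (x + y) <= tnorm x + tnorm y.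
Proof.
  destruct (tnorm_spec x) as [_ [p Hp]].
  destruct (tnorm_spec y) as [_ [p' Hp']].
  destruct (tnorm_spec (x + y)) as [Hmin _].
  eapply Rle_trans; [apply (Hmin (p + p')%Z) |].
  rewrite plus_IZR, Hp, Hp'.
  replace (x + y - (IZR p + IZR p')) with ((x - IZR p) + (y - IZR p')) by ring.
  apply Rabs_triang.
Qed.

Lemma tnorm_mul (k : Z) (x : R) : tnorm (IZR k * x) <= Rabs (IZR k) * tnorm x.
Proof.
  destruct (tnorm_spec x) as [_ [p Hp]].
  destruct (tnorm_spec (IZR k * x)) as [Hmin _].
  eapply Rle_trans; [apply (Hmin (k * p)%Z) |].
  rewrite mult_IZR, Hp, <- Rabs_mult.
  right; f_equal; ring.
Qed.

Lemma tdist_nonneg (a b : R) : 0 <= tdist a b.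
Proof. apply tnorm_nonneg. Qed.

Lemma tdist_trans (a b c : R) : tdist a c <= tdist a b + tdist b c.
Proof. unfold tdist. replace (a - c) with ((a - b) + (b - c)) by ring. apply tnorm_add. Qed.

Lemma tdist_telescope (f : nat -> R) (m q j : nat) (delta : R) :
  (forall k, (k <= j)%nat -> tdist (f (m + k * q)%nat) (f (m + k * q + q)%nat) < delta) ->
  tdist (f m) (f (m + S j * q)%nat) < INR (S j) * delta.
Proof.
  induction j as [| j IH]; intros Hstep.
  - replace (m + 1 * q)%nat with (m + 0 * q + q)%nat by lia.
    replace m with (m + 0 * q)%nat at 1 by lia.
    rewrite Rmult_1_l. apply Hstep; lia.
  - eapply Rle_lt_trans; [apply (tdist_trans _ (f (m + S j * q)%nat)) |].
    rewrite (S_INR (S j)).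
    replace (m + S (S j) * q)%nat with (m + S j * q + q)%nat by nia.
    assert (Hfirst := IH ltac:(intros k Hk; apply Hstep; lia)).
    assert (Hlast := Hstep (S j) ltac:(lia)).
    lra.
Qed.

Definition rep_bound (w F : nat -> R) (A : nat) (C : R) : Prop :=
  forall (r q : nat) (delta : R), (1 <= q)%nat ->
    (forall n, (n <= (r + 1) * A * q)%nat -> tdist (w n) (w (n + q)%nat) < delta) ->
    forall n, (n <= r * q)%nat -> tdist (F n) (F (n + q)%nat) < C * delta.

Definition controlled (w F : nat -> R) : Prop :=
  exists (A : nat) (C : R), (1 <= A)%nat /\ 0 < C /\ rep_bound w F A C.

(* A bound stays valid for larger constants; the precision delta in the
   hypothesis is automatically positive since it exceeds a distance. *)
Lemma rep_bound_mono (w F : nat -> R) (A A' : nat) (C C' : R) :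
  (A <= A')%nat -> C <= C' -> rep_bound w F A C -> rep_bound w F A' C'.
Proof.
  intros HA HC Hb r q delta Hq Hw n Hn.
  assert (Hdelta : 0 < delta).
  { eapply Rle_lt_trans; [apply (tdist_nonneg (w 0%nat) (w (0 + q)%nat)) |].
    apply Hw; lia. }
  assert (Hlt := Hb r q delta Hq ltac:(intros m Hm; apply Hw; nia) n Hn).
  nra.
Qed.

Lemma controlled_list {G : Type} (w : nat -> R) (F : G -> nat -> R) :
  (forall g, controlled w (F g)) ->
  forall S : list G, exists (A : nat) (C : R), (1 <= A)%nat /\ 0 < C /\
    forall g, In g S -> rep_bound w (F g) A C.
Proof.
  intros Hctrl S. induction S as [| a S IH].
  - exists 1%nat, 1. repeat split; [lia | lra | intros g []].
  - destruct (Hctrl a) as [A1 [C1 [HA1 [HC1 Hb1]]]].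
    destruct IH as [A2 [C2 [HA2 [HC2 Hb2]]]].
    exists (A1 + A2)%nat, (C1 + C2). repeat split; [lia | lra |].
    intros g [<- | Hin].
    + apply (rep_bound_mono _ _ A1 _ C1); [lia | lra | exact Hb1].
    + apply (rep_bound_mono _ _ A2 _ C2); [lia | lra | exact (Hb2 g Hin)].
Qed.

Lemma joint_repetition_of_controlled {G : Type} (w : nat -> R) (F : G -> nat -> R) :
  repetition w -> (forall g, controlled w (F g)) -> joint_repetition F.
Proof.
  intros Hw Hctrl.
  assert (Hjoint : forall (S : list G) (eps : R) (r : nat), 0 < eps -> (1 <= r)%nat ->
    exists q : nat, (1 <= q)%nat /\
      forall g, In g S -> forall n, (n <= r * q)%nat ->
        tdist (F g n) (F g (n + q)%nat) < eps).
  { intros S eps r Heps Hr.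
    destruct (controlled_list w F Hctrl S) as [A [C [HA [HC Hb]]]].
    destruct (Hw (eps / C) ((r + 1) * A)%nat) as [q [Hq Hrep]];
      [apply Rdiv_lt_0_compat; lra | nia |].
    exists q; split; [exact Hq |].
    intros g Hin n Hn.
    replace eps with (C * (eps / C)) by (field; lra).
    exact (Hb g Hin r q (eps / C) Hq Hrep n Hn). }
  split; [| exact Hjoint].
  intros g eps r Heps Hr.
  destruct (Hjoint (g :: nil) eps r Heps Hr) as [q [Hq Hrep]].
  exists q; split; [exact Hq |]. apply Hrep; left; reflexivity.
Qed.

Lemma controlled_self (w : nat -> R) : controlled w w.
Proof.
  exists 1%nat, 1. repeat split; [lia | lra |].
  intros r q delta Hq Hw n Hn. rewrite Rmult_1_l. apply Hw; nia.
Qed.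

(* (a) The shift by l only needs the repetitions of w on an interval
   longer by l <= l q. *)
Lemma controlled_shift (w : nat -> R) (l : nat) :
  (1 <= l)%nat -> controlled w (fun n => w (n + l)%nat).
Proof.
  intros Hl. exists l, 1. repeat split; [exact Hl | lra |].
  intros r q delta Hq Hw n Hn. rewrite Rmult_1_l.
  replace (n + q + l)%nat with (n + l + q)%nat by lia.
  apply Hw; nia.
Qed.

(* (b) One period q of n |-> w (n l) consists of l periods q of w. *)
Lemma controlled_dilation (w : nat -> R) (l : nat) :
  (1 <= l)%nat -> controlled w (fun n => w (n * l)%nat).
Proof.
  destruct l as [| l]; [lia | intros _].
  exists (S l), (INR (S l)). repeat split; [lia | apply lt_0_INR; lia |].
  intros r q delta Hq Hw n Hn.
  replace ((n + q) * S l)%nat with (n * S l + S l * q)%nat by nia.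
  apply tdist_telescope. intros k Hk. apply Hw.
  assert (n * S l <= r * q * S l)%nat by nia.
  assert (k * q <= l * q)%nat by nia.
  nia.
Qed.

(* (c) Multiplication by k enlarges distances on T by at most |k|. *)
Lemma controlled_mul (w : nat -> R) (k : Z) :
  controlled w (fun n => IZR k * w n).
Proof.
  pose proof (Rabs_pos (IZR k)) as Hk.
  exists 1%nat, (Rabs (IZR k) + 1). repeat split; [lia | lra |].
  intros r q delta Hq Hw n Hn.
  assert (Hstep := Hw n ltac:(nia)).
  pose proof (tdist_nonneg (w n) (w (n + q)%nat)).
  unfold tdist in *.
  replace (IZR k * w n - IZR k * w (n + q)%nat) with (IZR k * (w n - w (n + q)%nat))
    by ring.
  eapply Rle_lt_trans; [apply tnorm_mul | nra].
Qed.

Lemma controlled_fam (w : nat -> R) (i : {i : fam_index | fam_valid i}) :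
  controlled w (fam w (proj1_sig i)).
Proof.
  destruct i as [[| l | l | k] Hi]; simpl in *.
  - apply controlled_self.
  - exact (controlled_shift w l Hi).
  - exact (controlled_dilation w l Hi).
  - apply controlled_mul.
Qed.

Theorem lemma3p1 (w : nat -> R) :
  repetition w ->
  (forall l : nat, (1 <= l)%nat -> repetition (fun n => w (n + l)%nat)) /\
  (forall l : nat, (1 <= l)%nat -> repetition (fun n => w (n * l)%nat)) /\
  (forall l : Z, repetition (fun n => IZR l * w n)) /\
  joint_repetition (fun i : {i : fam_index | fam_valid i} => fam w (proj1_sig i)).
Proof.
  intros Hw.
  assert (Hjoint := joint_repetition_of_controlled w _ Hw (controlled_fam w)).
  pose proof (proj1 Hjoint) as Hsingle.
  split; [| split; [| split]].
  - intros l Hl. exact (Hsingle (exist _ (FShift l) Hl)).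
  - intros l Hl. exact (Hsingle (exist _ (FDil l) Hl)).
  - intros l. exact (Hsingle (exist fam_valid (FMul l) I)).
  - exact Hjoint.
Qed.
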